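(* $VMO^w$ is a closed subspace of $BMO^w$ (with respect to the norm $\|f\|_{BMO^w}=\|mf\|_\infty+\|Mf\|_\infty$).
   Context: On $\mathbb{R}^n$ with Lebesgue measure $\lambda$ and cubes $Q$ (hypercubes): for $f\in L^1_{\mathrm{loc}}$, $f_Q=\left|\frac{1}{\lambda(Q)}\int_Q f\,d\lambda\right|$, $Mf(x)=\sup_{Q\ni x}\left|\frac{1}{\lambda(Q)}\int_Q[f(\xi)-f_Q]\,d\lambda(\xi)\right|$, $mf(x)=\sup_{Q\ni x}f_Q$ (suprema over cubes containing $x$). $BMO^w=\{f\in L^1_{\mathrm{loc}}: Mf\in L^\infty\}$. $VMO^w$ is the set of $f\in L^1_{\mathrm{loc}}$ with $\lim_{\lambda(Q)\to0}\left|\frac{1}{\lambda(Q)}\int_Q[f(\xi)-f_Q]\,d\lambda(\xi)\right|=0$. *)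

From HB Require Import structures.
From mathcomp Require Import all_boot all_order all_algebra.
From mathcomp Require Import all_classical all_reals all_analysis.
Set Implicit Arguments.
Unset Strict Implicit.
Unset Printing Implicit Defensive.
Import Order.TTheory GRing.Theory Num.Theory.
Import numFieldNormedType.Exports.
Local Open Scope classical_set_scope.
Local Open Scope ring_scope.

Fixpoint lebn (R : realType) (n : nat) : set (n.-tuple R) -> \bar R :=
  match n as n0 return set (n0.-tuple R) -> \bar R with
  | 0 => fun A => (\1_A (nil_tuple R))%:E
  | n'.+1 => fun A =>
      (\int[@lebesgue_measure R]_x
          @lebn R n' (fun t : n'.-tuple R => A (cons_tuple x t)))%E
  end.

Definition cube (R : realType) (n : nat) (a : n.-tuple R) (s : R)
  : set (n.-tuple R) :=
  [set x | forall i : 'I_n, tnth a i <= tnth x i <= tnth a i + s].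

Definition is_cube (R : realType) (n : nat) (Q : set (n.-tuple R)) : Prop :=
  exists (a : n.-tuple R) (s : R), 0 < s /\ Q = cube a s.

Definition vol (R : realType) (n : nat) (Q : set (n.-tuple R)) : R :=
  fine (@lebn R n Q).

Definition intQ (R : realType) (n : nat) (Q : set (n.-tuple R))
  (f : n.-tuple R -> R) : R :=
  fine (\int[@lebn R n]_(x in Q) (f x)%:E)%E.

Definition fQ (R : realType) (n : nat) (f : n.-tuple R -> R)
  (Q : set (n.-tuple R)) : R :=
  `| intQ Q f / vol Q |.

Definition osc (R : realType) (n : nat) (f : n.-tuple R -> R)
  (Q : set (n.-tuple R)) : R :=
  `| intQ Q (fun xi => f xi - fQ f Q) / vol Q |.

Definition Mw (R : realType) (n : nat) (f : n.-tuple R -> R)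
  (x : n.-tuple R) : \bar R :=
  ereal_sup [set (osc f Q)%:E | Q in [set Q | is_cube Q /\ Q x]].

Definition mw (R : realType) (n : nat) (f : n.-tuple R -> R)
  (x : n.-tuple R) : \bar R :=
  ereal_sup [set (fQ f Q)%:E | Q in [set Q | is_cube Q /\ Q x]].

Definition Linf_norm (R : realType) (n : nat) (g : n.-tuple R -> \bar R)
  : \bar R :=
  ereal_inf [set y : \bar R |
    almost_everywhere (@lebn R n) (fun x => (`|g x| <= y)%E)].

(* f in L^1_loc(R^n): measurable and integrable on every cube
   (equivalently on every compact set) *)
Definition L1loc (R : realType) (n : nat) (f : n.-tuple R -> R) : Prop :=
  measurable_fun [set: n.-tuple R] f /\
  forall Q : set (n.-tuple R), is_cube Q ->
    (\int[@lebn R n]_(x in Q) `|(f x)%:E| < +oo)%E.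

Definition BMOw (R : realType) (n : nat) (f : n.-tuple R -> R) : Prop :=
  L1loc f /\ (Linf_norm (Mw f) < +oo)%E.

Definition VMOw (R : realType) (n : nat) (f : n.-tuple R -> R) : Prop :=
  L1loc f /\
  forall eps : R, 0 < eps -> exists delta : R, 0 < delta /\
    forall Q : set (n.-tuple R), is_cube Q -> vol Q < delta -> osc f Q < eps.

Definition BMOw_norm (R : realType) (n : nat) (f : n.-tuple R -> R) : \bar R :=
  (Linf_norm (mw f) + Linf_norm (Mw f))%E.

From HB Require Import structures.
From mathcomp Require Import all_boot all_order all_algebra.
From mathcomp Require Import all_classical all_reals all_analysis.
Import Order.TTheory GRing.Theory Num.Theory.
Import numFieldNormedType.Exports.
From mathcomp Require Import measurable_realfun lra zify.

(* Since f_Q = |mean_Q f|, the oscillation |mean_Q (f - f_Q)| equals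
   |mean_Q f| - mean_Q f: it vanishes when mean_Q f >= 0 and is -2 mean_Q f
   otherwise.  So in positive dimension a VMO^w function has means > -eps on
   all small cubes; as every cube is, up to null hyperplanes, a union of
   congruent small cubes, all its cube means are nonnegative, whence Mf = 0
   and f is in BMO^w.  Conversely nonnegative cube means give VMO^w, and they
   survive BMO^w-limits: if ||m(f - f_k)||_oo < c, every cube Q contains a
   point x with |mean_Q (f - f_k)| <= m(f - f_k)(x) < c, so
   mean_Q f > mean_Q f_k - c >= -c.  In dimension 0 the only cube is the
   one-point space, of volume 1, and both claims are immediate. *)

Set Implicit Arguments.
Unset Strict Implicit.
Unset Printing Implicit Defensive.
Local Open Scope classical_set_scope.
Local Open Scope ring_scope.

Section iterated_lebesgue_measure.
Context (R : realType).
Local Open Scope ereal_scope.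

Definition lebesgue0 : set (0.-tuple R) -> \bar R := \d_[tuple].

HB.instance Definition _ := Measure.on lebesgue0.

Lemma lebesgue0_sigma_finite : sigma_finite setT lebesgue0.
Proof.
exists (fun=> setT); first by rewrite bigcup_const.
by move=> _; split => //; rewrite /lebesgue0 diracT ltry.
Qed.

HB.instance Definition _ :=
  Measure_isSigmaFinite.Build _ _ _ lebesgue0 lebesgue0_sigma_finite.

Variables (n : nat) (mu : {sigma_finite_measure set (n.-tuple R) -> \bar R}).

Definition tcons (p : measurableTypeR R * n.-tuple R) : n.+1.-tuple R :=
  [tuple of p.1 :: p.2].

Definition tuncons (t : n.+1.-tuple R) : measurableTypeR R * n.-tuple R :=
  (thead t, [tuple of behead t]).

Lemma tconsK : cancel tcons tuncons.
Proof. by case=> x t; congr pair; exact: val_inj. Qed.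

Lemma measurable_tcons : measurable_fun setT tcons.
Proof. exact: measurable_cons. Qed.

Lemma measurable_tuncons : measurable_fun setT tuncons.
Proof.
by apply/measurable_fun_pairP; split; [exact: measurable_tnth|exact: measurable_behead].
Qed.

Definition lebesgue_succ := pushforward (lebesgue_measure \x mu) tcons.

(* [pushforward m f] is a measure only given a proof that [f] is measurable,
   which canonical-structure inference cannot find by itself. *)
HB.instance Definition _ := Measure.copy lebesgue_succ
  (measure_function_pushforward__canonical__measure_function_Measure _
     measurable_tcons).

Lemma lebesgue_succ_sigma_finite : sigma_finite setT lebesgue_succ.
Proof.
have /sigma_finiteP[F [TF ndF Foo]] := sigma_finiteT (@lebesgue_measure R).
have /sigma_finiteP[G [TG ndG Goo]] := sigma_finiteT mu.
exists (fun k => tuncons @^-1` (F k `*` G k)).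
  apply/seteqP; split => // t _.
  have : [set: measurableTypeR R * n.-tuple R] (tuncons t) by [].
  rewrite -setXTT TF TG => -[/= [i _ Fi] [j _ Gj]].
  exists (maxn i j) => //; split.
  - by move: Fi; exact/subsetPset/ndF/leq_maxl.
  - by move: Gj; exact/subsetPset/ndG/leq_maxr.
move=> k; have [mF Fk] := Foo k; have [mG Gk] := Goo k; split.
  rewrite -[X in measurable X]setTI.
  by apply: measurable_tuncons => //; exact: measurableX.
rewrite /lebesgue_succ /pushforward -comp_preimage.
rewrite (_ : tuncons \o tcons = id); last exact/funext/tconsK.
by rewrite product_measure1E// lte_mul_pinfty// ge0_fin_numE.
Qed.

HB.instance Definition _ :=
  Measure_isSigmaFinite.Build _ _ _ lebesgue_succ lebesgue_succ_sigma_finite.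

End iterated_lebesgue_measure.

Fixpoint lebm (R : realType) (n : nat)
    : {sigma_finite_measure set (n.-tuple R) -> \bar R} :=
  match n with
  | 0 => @lebesgue0 R
  | n'.+1 => @lebesgue_succ R n' (lebm R n')
  end.

Lemma lebnE (R : realType) (n : nat) : @lebn R n = lebm R n.
Proof.
elim: n => [|n IH] //; apply/funext => A /=.
apply: eq_integral => x _; rewrite IH; congr (lebm R n _).
by apply/seteqP; split => t; rewrite /xsection /preimage /= inE.
Qed.

Section boxes.
Context (R : realType) (n : nat).
Implicit Types (a w : 'I_n -> R) (i : 'I_n) (c : R).

Definition box a w : set (n.-tuple R) :=
  [set x | forall i, a i <= tnth x i <= a i + w i].

Lemma cube_box (a : n.-tuple R) s : cube a s = box (tnth a) (fun=> s).
Proof. by []. Qed.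

Lemma box_cube (a : 'I_n -> R) t : box a (fun=> t) = cube [tuple a i | i < n] t.
Proof. by apply/seteqP; split=> x /= xB i; have := xB i; rewrite tnth_mktuple. Qed.

Lemma measurable_box a w : measurable (box a w).
Proof.
rewrite (_ : box a w =
    \bigcap_(i in setT) ((fun x => tnth x i) @^-1` `[a i, a i + w i])).
  apply: fin_bigcap_measurable => [|i _]; first exact: finite_finset.
  by rewrite -[X in measurable X]setTI; exact: measurable_tnth.
apply/seteqP; split=> x /= xB i; first by move=> _; rewrite /= in_itv; exact: xB.
by have := xB i I; rewrite /= in_itv.
Qed.

Lemma measurable_hyperplane i c : measurable [set x : n.-tuple R | tnth x i = c].
Proof. by have := measurable_tnth i measurableT (measurable_set1 c); rewrite setTI. Qed.

End boxes.

Lemma forall_ordS (n : nat) (P : 'I_n.+1 -> Prop) :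
  (forall i, P i) <-> P ord0 /\ (forall j : 'I_n, P (lift ord0 j)).
Proof.
split=> [P_ | [P0 PS] i]; first by split.
by case: (unliftP ord0 i) => [j ->|->].
Qed.

Section lebesgue_boxes.
Context (R : realType).
Local Open Scope ereal_scope.

Lemma lebmS (n : nat) (A : set (n.+1.-tuple R)) :
  lebm R n.+1 A = (lebesgue_measure \x lebm R n) (@tcons R n @^-1` A).
Proof. by []. Qed.

Lemma lebm_box (n : nat) (a w : 'I_n -> R) : (forall i, 0 <= w i)%R ->
  lebm R n (box a w) = (\prod_i w i)%:E.
Proof.
elim: n a w => [|n IH] a w w_ge0.
  by rewrite big_ord0 /= /lebesgue0 diracE mem_set // => -[].
rewrite lebmS (_ : _ @^-1` _ =
    `[a ord0, (a ord0 + w ord0)%R] `*` box (a \o lift ord0) (w \o lift ord0));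
    last first.
  apply/seteqP; split=> -[x t];
    rewrite /preimage /box /tcons /= forall_ordS /= tnth0 in_itv /=;
    by move=> [x0 t_in]; split=> // j; have := t_in j; rewrite tnthS.
rewrite product_measure1E //; last exact: measurable_box.
rewrite IH; last by move=> i; exact: w_ge0.
rewrite -[X in (X * _)%E]/(lebesgue_measure _) lebesgue_measure_itv /=.
rewrite big_ord_recl.
case: ltP => [_|]; first by rewrite -EFinB -EFinM addrAC subrr add0r.
rewrite lee_fin => w0_le0.
by rewrite (_ : w ord0 = 0%R) ?mul0e ?mul0r //; have := w_ge0 ord0; lra.
Qed.

Lemma lebm_hyperplane (n : nat) (i : 'I_n) (c : R) :
  lebm R n [set x | tnth x i = c] = 0.
Proof.
elim: n i => [|n IH] i; first by case: i.
rewrite lebmS; case: (unliftP ord0 i) => [j ->|->].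
- change 'I_n in j.
  rewrite (_ : _ @^-1` _ = setT `*` [set x | tnth x j = c]); last first.
    by apply/seteqP; split=> -[x t]; rewrite /preimage /tcons /= tnthS; [split|case].
  by rewrite product_measure1E ?IH ?mule0 //; exact: measurable_hyperplane.
- rewrite (_ : _ @^-1` _ = [set c] `*` setT); last first.
    apply/seteqP; split=> -[x t]; rewrite /preimage /tcons /= tnth0.
      by move=> ->.
    by case=> ->.
  by rewrite product_measure1E // -[X in (X * _)%E]/(lebesgue_measure _)
    lebesgue_measure_set1 mul0e.
Qed.

End lebesgue_boxes.

Lemma integral_setU_null d (T : measurableType d) (R : realType)
    (mu : {measure set T -> \bar R}) (A B : set T) (g : T -> \bar R) :
  measurable A -> measurable B -> measurable_fun (A `|` B) g ->
  mu (A `&` B) = 0%E ->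
  (\int[mu]_(x in A `|` B) g x = \int[mu]_(x in A) g x + \int[mu]_(x in B) g x)%E.
Proof.
move=> mA mB mg AB0.
have mAUB : measurable (A `|` B) by exact: measurableU.
have mBA : measurable (B `\` A) by exact: measurableD.
have mAB : measurable (A `&` B) by exact: measurableI.
have ABE : A `|` B = A `|` (B `\` A) by rewrite setDE setUIr setUv setIT.
have BE : B = (B `\` A) `|` (A `&` B) by rewrite setUC setIC setUIDK.
rewrite ABE integral_setU //; last 2 first.
- by rewrite -ABE.
- by apply/disj_setPS => x [? []].
rewrite [in RHS]BE integral_setU //; last 2 first.
- by rewrite -BE; apply: measurable_funS mg => // x; right.
- by apply/disj_setPS => x [[? ?] []].
rewrite [X in (_ + (_ + X))%E]null_set_integral ?adde0 //.
by apply: measurable_funS mg => // x [? _]; left.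
Qed.

Section box_grid.
Context (R : realType) (n : nat).
Local Open Scope ereal_scope.
Implicit Types (a w : 'I_n -> R) (i : 'I_n) (u : R).

Lemma box_split a w i u : (0 <= u <= w i)%R ->
  box a w = box a [eta w with i |-> u]
    `|` box [eta a with i |-> (a i + u)%R] [eta w with i |-> (w i - u)%R].
Proof.
move=> /andP[u_ge0 u_le]; apply/seteqP; split=> x /=.
  move=> xB; have [xi|xi] := leP (tnth x i) (a i + u)%R; [left|right] => j /=;
    by case: eqP => [->|_]; [have := xB i; lra|exact: xB].
by move=> [] xB j; have := xB j; rewrite /=; case: eqP => [->|_] //; lra.
Qed.

Lemma box_split_meet a w i u :
  box a [eta w with i |-> u]
    `&` box [eta a with i |-> (a i + u)%R] [eta w with i |-> (w i - u)%R]
  `<=` [set x | tnth x i = (a i + u)%R].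
Proof. by move=> x [/(_ i) + /(_ i)]; rewrite /= eqxx; lra. Qed.

Variables (g : n.-tuple R -> \bar R) (t : R).
Hypotheses (mg : measurable_fun setT g) (t_gt0 : (0 < t)%R).
Hypothesis g_ge0 : forall a, 0 <= \int[lebm R n]_(x in box a (fun=> t)) g x.

Lemma integral_box_grid_ge0 (m : 'I_n -> nat) a : (forall i, 0 < m i)%N ->
  0 <= \int[lebm R n]_(x in box a (fun i => (m i)%:R * t)%R) g x.
Proof.
(* Induction on the number of cells: peel a slab of width t off a side that
   is at least 2t long; the two pieces meet in a null hyperplane. *)
move=> m_gt0; have [N] := ubnP (\sum_i m i); elim: N m m_gt0 a => // N IH m m_gt0 a.
have [m1 _|/existsNP[i mi_neq1] sum_m] := pselect (forall i, m i = 1%N).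
  by rewrite (_ : (fun i => _) = fun=> t) //; apply/funext => i; rewrite m1 mul1r.
have mi_gt1 : (1 < m i)%N by have := m_gt0 i; lia.
have sum_eta k : (\sum_j [eta m with i |-> k] j + m i = \sum_j m j + k)%N.
  rewrite (bigD1 i) //= [in RHS](bigD1 i) //= eqxx.
  rewrite (eq_bigr m) => [|j /negbTE /= ->] //; lia.
pose w j := ((m j)%:R * t)%R.
have t_le : (0 <= t <= w i)%R.
  by rewrite (ltW t_gt0) /= ler_peMl ?(ltW t_gt0) // ler1n; lia.
have w_head : ([eta w with i |-> t] : _ -> R) =
    fun j => (([eta m with i |-> 1%N] j)%:R * t)%R.
  by apply/funext => j /=; case: eqP; rewrite ?mul1r.
have w_tail : ([eta w with i |-> (w i - t)%R] : _ -> R) =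
    fun j => (([eta m with i |-> (m i).-1] j)%:R * t)%R.
  apply/funext => j /=; case: eqP => // _.
  by rewrite /w -{1}(prednK (ltnW mi_gt1)) -addn1 natrD mulrDl mul1r addrK.
rewrite -/w (box_split _ t_le) integral_setU_null;
  [|exact: measurable_box|exact: measurable_box|exact: measurable_funTS|]; last first.
  apply: (subset_measure0 _ _ (box_split_meet (u:=t))).
  - by apply: measurableI; exact: measurable_box.
  - exact: measurable_hyperplane.
  - exact: lebm_hyperplane.
rewrite w_head w_tail; apply: adde_ge0; apply: IH.
- by move=> j /=; case: eqP.
- by have := sum_eta 1%N; lia.
- by move=> j /=; case: eqP => [_|_]; [lia|exact: m_gt0].
- by have := sum_eta (m i).-1; lia.
Qed.

End box_grid.

Lemma norm_sub_normr (R : realDomainType) (x : R) : `|x - `|x| | = `|x| - x.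
Proof.
have [x_ge0|x_lt0] := leP 0 x; first by rewrite (ger0_norm x_ge0) subrr normr0.
by rewrite (ltr0_norm x_lt0) opprK ltr0_norm; lra.
Qed.

Definition mean (R : realType) (n : nat) (f : n.-tuple R -> R)
    (Q : set (n.-tuple R)) : R :=
  intQ Q f / vol Q.

Section cube_means.
Context (R : realType) (n : nat).
Implicit Types (f g : n.-tuple R -> R) (a : n.-tuple R) (s : R).

Lemma is_cube_cube a s : 0 < s -> is_cube (cube a s).
Proof. by move=> s_gt0; exists a, s. Qed.

Lemma measurable_cube a s : measurable (cube a s).
Proof. exact: measurable_box. Qed.

(* Stated for the measure coercion of [lebm], the form in which volumes
   appear after integrating constants. *)
Lemma lebm_cube a s : 0 <= s ->
  (lebm R n : {measure set _ -> \bar R}) (cube a s) = (s ^+ n)%:E.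
Proof. by move=> s_ge0; rewrite cube_box [LHS]lebm_box // prodr_const card_ord. Qed.

Lemma vol_cube a s : 0 <= s -> vol (cube a s) = s ^+ n.
Proof. by move=> s_ge0; rewrite /vol lebnE lebm_cube. Qed.

Lemma intQ_cube f a s : 0 < s -> intQ (cube a s) f = mean f (cube a s) * s ^+ n.
Proof.
by move=> s_gt0; rewrite /mean vol_cube ?(ltW s_gt0) // divfK // expf_neq0 // gt_eqF.
Qed.

Lemma integrable_cube f a s : L1loc f -> 0 < s ->
  (lebm R n).-integrable (cube a s) (EFin \o f).
Proof.
move=> [mf f_int] s_gt0; apply/integrableP; split.
  by apply/measurable_EFinP; exact: measurable_funTS.
by rewrite -lebnE; exact: f_int (is_cube_cube a s_gt0).
Qed.

Lemma intQ_cubeE f a s : L1loc f -> 0 < s ->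
  (\int[lebm R n]_(x in cube a s) (f x)%:E)%E = (intQ (cube a s) f)%:E.
Proof.
move=> f_loc s_gt0; rewrite /intQ lebnE fineK //.
exact: (integrable_fin_num (measurable_cube a s) (integrable_cube a f_loc s_gt0)).
Qed.

Lemma integral_cube_addr f a s k : L1loc f -> 0 < s ->
  (\int[lebm R n]_(x in cube a s) (f x + k)%:E)%E = (intQ (cube a s) f + k * s ^+ n)%:E.
Proof.
move=> f_loc s_gt0.
have k_int : (lebm R n).-integrable (cube a s) (EFin \o cst k).
  apply/integrableP; split; first exact/measurable_EFinP.
  rewrite (eq_integral (cst `|k|%:E)) // integral_cst; last exact: measurable_cube.
  by rewrite lebm_cube ?(ltW s_gt0) // -EFinM ltry.
rewrite (integralD_EFin (measurable_cube a s) (integrable_cube a f_loc s_gt0) k_int).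
rewrite intQ_cubeE // (eq_integral (cst k%:E)) //.
rewrite integral_cst; last exact: measurable_cube.
by rewrite lebm_cube ?(ltW s_gt0).
Qed.

Lemma mean_cube_addr f a s k : L1loc f -> 0 < s ->
  mean (fun x => f x + k) (cube a s) = mean f (cube a s) + k.
Proof.
move=> f_loc s_gt0; have sn_neq0 : s ^+ n != 0 by rewrite expf_neq0 // gt_eqF.
rewrite /mean {1}/intQ lebnE integral_cube_addr // vol_cube ?(ltW s_gt0) //.
by rewrite mulrDl mulfK.
Qed.

Lemma mean_cubeB f g a s : L1loc f -> L1loc g -> 0 < s ->
  mean (fun x => f x - g x) (cube a s) = mean f (cube a s) - mean g (cube a s).
Proof.
move=> f_loc g_loc s_gt0; rewrite /mean -mulrBl; congr (_ / _).
rewrite [LHS]/intQ lebnE; under eq_integral do rewrite EFinB.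
rewrite integralB_EFin; [|exact: measurable_cube|exact: integrable_cube..].
by rewrite !intQ_cubeE.
Qed.

Lemma osc_cube f a s : L1loc f -> 0 < s ->
  osc f (cube a s) = `|mean f (cube a s)| - mean f (cube a s).
Proof.
move=> f_loc s_gt0; rewrite /osc -/(mean _ _) mean_cube_addr //.
by rewrite norm_sub_normr.
Qed.

Lemma osc_cube_eq0 f a s : L1loc f -> 0 < s -> 0 <= mean f (cube a s) ->
  osc f (cube a s) = 0.
Proof. by move=> f_loc s_gt0 mean_ge0; rewrite osc_cube // ger0_norm // subrr. Qed.

Lemma mean_cube_ge_osc f a s : L1loc f -> 0 < s ->
  - (osc f (cube a s) / 2) <= mean f (cube a s).
Proof.
move=> f_loc s_gt0; rewrite osc_cube //.
by have := ler_norm (- mean f (cube a s)); rewrite normrN; lra.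
Qed.

End cube_means.

Section essential_sup.
Context (R : realType) (n : nat).
Implicit Types (g : n.-tuple R -> \bar R) (A : set (n.-tuple R)).
Local Open Scope ereal_scope.

Lemma Linf_norm_le g (C : \bar R) : (forall x, `|g x| <= C) -> Linf_norm g <= C.
Proof. by move=> g_le; apply: ereal_inf_lbound; rewrite /= lebnE; exact: aeW. Qed.

Lemma exists_lt_Linf_norm g A (c : \bar R) : measurable A ->
  (lebm R n : {measure set _ -> \bar R}) A != 0 ->
  Linf_norm g < c -> exists2 x, A x & `|g x| < c.
Proof.
move=> mA A_neq0 /ereal_inf_lt[z]; rewrite /= lebnE => -[N [mN N0 gN]] zc.
apply: contrapT => no_x; move/eqP: A_neq0; apply.
apply: (subset_measure0 mA mN _ N0) => x Ax; apply: gN => /= gz.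
by apply: no_x; exists x => //; exact: le_lt_trans gz zc.
Qed.

Lemma Linf_norm_ge0 g : 0 <= Linf_norm g.
Proof.
rewrite leNgt; apply/negP => g_lt0.
have [|x _] := exists_lt_Linf_norm (measurable_cube [tuple 0%R | _ < n] 1) _ g_lt0.
  by rewrite lebm_cube ?ler01 // expr1n.
by rewrite ltNge abse_ge0.
Qed.

End essential_sup.

Lemma exists_fraction_lt (R : archiFieldType) (s e : R) : 0 < e ->
  exists2 M : nat, (0 < M)%N & s / M%:R < e.
Proof.
move=> e_gt0; exists (Num.truncn (s / e)).+1 => //.
by rewrite ltr_pdivrMr // mulrC -ltr_pdivrMr // Num.Theory.truncnS_gt.
Qed.

Section weak_VMO.
Context (R : realType) (n : nat).
Implicit Types (f : n.-tuple R -> R) (a : n.-tuple R) (s : R).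

Definition nonneg_cube_means f := forall a s, 0 < s -> 0 <= mean f (cube a s).

Lemma VMOw_nonneg_cube_means f : (0 < n)%N -> VMOw f -> nonneg_cube_means f.
Proof.
move=> n_gt0 [f_loc f_vmo] a s s_gt0; apply/ler_addgt0Pr => c c_gt0.
have [d [d_gt0 small_osc]] := f_vmo (2 * c) (ltac:(lra)).
have min_gt0 : 0 < Num.min d 1 by rewrite lt_min d_gt0 ltr01.
have [M M_gt0 t_lt] := exists_fraction_lt s min_gt0.
set t := s / M%:R in t_lt; rewrite lt_min in t_lt; case/andP: t_lt => t_lt_d t_lt1.
have t_gt0 : 0 < t by rewrite divr_gt0 // ltr0n.
have tn_lt_d : t ^+ n < d.
  apply: le_lt_trans t_lt_d; case: n n_gt0 {f_vmo small_osc a f_loc} => // k _.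
  by rewrite exprS ler_piMr ?(ltW t_gt0) // exprn_ile1 ?(ltW t_gt0) ?(ltW t_lt1).
pose g x := (f x + c)%:E.
have mg : measurable_fun setT g.
  by apply/measurable_EFinP; apply: measurable_funD => //; exact: f_loc.1.
have small_cubes b : (0 <= \int[lebm R n]_(x in box b (fun=> t)) g x)%E.
  rewrite box_cube integral_cube_addr // intQ_cube // -mulrDl lee_fin.
  apply: mulr_ge0; last by rewrite exprn_ge0 // ltW.
  have := mean_cube_ge_osc [tuple b i | i < n] f_loc t_gt0.
  have := small_osc _ (is_cube_cube [tuple b i | i < n] t_gt0).
  by rewrite vol_cube ?(ltW t_gt0) //; move/(_ tn_lt_d); lra.
have := integral_box_grid_ge0 mg t_gt0 small_cubes (tnth a) (fun=> M_gt0).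
rewrite (_ : M%:R * t = s); last by rewrite /t mulrC divfK // pnatr_eq0 -lt0n.
rewrite -cube_box integral_cube_addr // intQ_cube // -mulrDl lee_fin.
by rewrite pmulr_lge0 // exprn_gt0.
Qed.

Lemma fQ_le_mw f Q x : is_cube Q -> Q x -> ((fQ f Q)%:E <= mw f x)%E.
Proof. by move=> cQ Qx; apply: ereal_sup_ubound; exists Q. Qed.

Lemma Mw_ge0 f x : (0 <= Mw f x)%E.
Proof.
apply: (@le_trans _ _ (osc f (cube x 1))%:E); first by rewrite lee_fin normr_ge0.
apply: ereal_sup_ubound; exists (cube x 1) => //; split; first exact: is_cube_cube.
by move=> i; rewrite lexx lerDl ler01.
Qed.

Lemma nonneg_cube_means_Mw f : L1loc f -> nonneg_cube_means f -> Mw f = cst 0%E.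
Proof.
move=> f_loc f_ge0; apply/funext => x; apply/eqP; rewrite eq_le Mw_ge0 andbT.
apply: ge_ereal_sup => _ [_ [[a [s [s_gt0 ->]]] _] <-].
by rewrite osc_cube_eq0 ?f_ge0.
Qed.

Lemma nonneg_cube_means_BMOw f : L1loc f -> nonneg_cube_means f -> BMOw f.
Proof.
move=> f_loc f_ge0; split=> //; rewrite nonneg_cube_means_Mw //.
by apply: le_lt_trans (ltry 0); apply: Linf_norm_le => x; rewrite abse0.
Qed.

Lemma nonneg_cube_means_VMOw f : L1loc f -> nonneg_cube_means f -> VMOw f.
Proof.
move=> f_loc f_ge0; split=> // e e_gt0; exists 1; split=> // _ [a [s [s_gt0 ->]]] _.
by rewrite osc_cube_eq0 ?f_ge0.
Qed.

Lemma BMOw_limit_nonneg_cube_means (fk : nat -> n.-tuple R -> R) f :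
  (0 < n)%N -> (forall k, VMOw (fk k)) -> L1loc f ->
  (forall eps, 0 < eps -> exists N, forall k, (N <= k)%N ->
     (BMOw_norm (fun x => (f x - fk k x)%R) <= eps%:E)%E) ->
  nonneg_cube_means f.
Proof.
move=> n_gt0 fk_vmo f_loc fk_cvg a s s_gt0; apply/ler_addgt0Pr => c c_gt0.
have [N /(_ N (leqnn N)) fN_close] := fk_cvg (c / 2) (ltac:(lra)).
set h := fun x => f x - fk N x in fN_close.
have mw_small : (Linf_norm (mw h) < c%:E)%E.
  apply: le_lt_trans (leeDl _ (Linf_norm_ge0 (Mw h))) _.
  by apply: le_lt_trans fN_close _; rewrite lte_fin; lra.
have [|x Qx] := exists_lt_Linf_norm (measurable_cube a s) _ mw_small.
  by rewrite lebm_cube ?(ltW s_gt0) // eqe expf_neq0 // gt_eqF.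
move=> /(le_lt_trans (le_trans (fQ_le_mw h (is_cube_cube a s_gt0) Qx) (lee_abs _))).
rewrite lte_fin /fQ -/(mean h _) mean_cubeB //; last exact: (fk_vmo N).1.
have := VMOw_nonneg_cube_means n_gt0 (fk_vmo N) a s_gt0.
by rewrite ltr_norml; lra.
Qed.

End weak_VMO.

Section dimension_zero.
Context (R : realType).
Implicit Types (f : 0.-tuple R -> R).

Lemma cube_dim0 (a : 0.-tuple R) s : cube a s = setT.
Proof. by apply/seteqP; split=> // x _ []. Qed.

Lemma VMOw_dim0 f : L1loc f -> VMOw f.
Proof.
move=> f_loc; split=> // e _; exists 1; split=> // _ [a [s [s_gt0 ->]]].
by rewrite vol_cube ?(ltW s_gt0) // expr0 ltxx.
Qed.

Lemma BMOw_dim0 f : L1loc f -> BMOw f.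
Proof.
move=> f_loc; split=> //; apply: le_lt_trans (ltry (osc f setT)).
apply: Linf_norm_le => x; rewrite gee0_abs ?Mw_ge0 //.
by apply: ge_ereal_sup => _ [_ [[a [s [_ ->]]] _] <-]; rewrite cube_dim0.
Qed.

End dimension_zero.

Theorem theorem7 (R : realType) (n : nat) :
  (* VMO^w is contained in BMO^w *)
  (forall f : n.-tuple R -> R, VMOw f -> BMOw f) /\
  (* and it is closed in BMO^w for the BMO^w-norm *)
  (forall (fk : nat -> n.-tuple R -> R) (f : n.-tuple R -> R),
     (forall k, VMOw (fk k)) -> BMOw f ->
     (forall eps : R, 0 < eps -> exists N : nat, forall k : nat, (N <= k)%N ->
        (BMOw_norm (fun x => (f x - fk k x)%R) <= eps%:E)%E) ->
     VMOw f).
Proof.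
case: n => [|n]; split.
- by move=> f [f_loc _]; exact: BMOw_dim0.
- by move=> fk f _ [f_loc _] _; exact: VMOw_dim0.
- move=> f f_vmo; apply: (nonneg_cube_means_BMOw f_vmo.1).
  exact: VMOw_nonneg_cube_means.
- move=> fk f fk_vmo [f_loc _] fk_cvg; apply: (nonneg_cube_means_VMOw f_loc).
  exact: BMOw_limit_nonneg_cube_means fk_vmo f_loc fk_cvg.
Qed.
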